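(* Let $X$ be a mixed-stable sequence with respect to a full BST $T$. For every leaf $u$ of $T$ there are non-negative integers $a(u),b(u)$ such that the queries to $u$ occur exactly once every $2^{a(u)}3^{b(u)}$ consecutive queries of $X$. Consequently, the length of the atomic sequence of $X$ is $$2^{\max_u a(u)}\cdot 3^{\max_u b(u)},$$ the maxima being over leaves $u$. Moreover, if $X$ is strongly-stable then $b(u)=0$ for all leaves $u$, and if $X$ is weakly-stable then $a(u)=0$ for all leaves $u$.
   Context: Stable sequences. Let $T$ be a full binary search tree (every inner node has exactly two children), and let $X$ be a query sequence consisting only of keys stored at leaves of $T$. For an inner node $v$, let $X_v$ be the subsequence of $X$ consisting of the queries to keys in the subtree of $v$. - The node $v$ is strongly-stable if consecutive queries of $X_v$ alternate between the left and right subtrees of $v$. - The node $v$ is weakly-stable with a left bias if its left child $u$ is an inner node and $X_v$ repeats cyclically (from some starting phase) the pattern: a query in the left subtree of $u$, then one in the right subtree of $u$, then one in the right subtree of $v$. - Weakly-stable with a right bias is the mirror image: $u$ is the right child of $v$, and the pattern is right subtree of $u$, left subtree of $u$, left subtree of $v$. In both weakly-stable cases $u$ is called the favored child of $v$. $X$ (and $T$) is mixed-stable if every inner node of $T$ is strongly-stable or weakly-stable. It is strongly-stable if every inner node is strongly-stable, and weakly-stable if exactly half of the inner nodes are weakly-stable. Given $T$, the stability type of each inner node, and the subtree each node's pattern starts with, the stable sequence is determined up to its length. Its atomic sequence is the shortest such sequence all of whose repetitions are again such stable sequences. *)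

From Stdlib Require List.
From mathcomp Require Import all_boot.
Set Implicit Arguments. Unset Strict Implicit. Unset Printing Implicit Defensive.

Inductive bst : Type :=
| Leaf of nat
| Node of bst & bst.

Fixpoint leaves (t : bst) : seq nat :=
  match t with
  | Leaf k => [:: k]
  | Node l r => leaves l ++ leaves r
  end.

(* the inner nodes of t, each represented by the subtree rooted at it
   (preorder); for a search tree (distinct keys) distinct nodes give
   distinct subtrees *)
Fixpoint inner (t : bst) : seq bst :=
  match t with
  | Leaf _ => [::]
  | Node l r => t :: (inner l ++ inner r)
  end.

Definition is_bst (t : bst) : Prop := sorted ltn (leaves t).

Definition qseq := nat -> nat.

(* i < j are consecutive positions of the subsequence X_A of X
   consisting of the queries to keys in A *)
Definition consec (A : seq nat) (X : qseq) (i j : nat) : Prop :=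
  [/\ i < j, X i \in A, X j \in A & forall k, i < k < j -> X k \notin A].

Definition strongly_stable_node (X : qseq) (v : bst) : Prop :=
  match v with
  | Leaf _ => False
  | Node l r => forall i j, consec (leaves v) X i j ->
      (X i \in leaves l) != (X j \in leaves l)
  end.

(* weakly-stable with a left bias: left child u = Node ul ur is inner and
   X_v repeats cyclically (from some phase) the pattern
   ul-query, ur-query, r-query. *)
Definition weak_left_node (X : qseq) (v : bst) : Prop :=
  match v with
  | Node (Node ul ur) r =>
      let c x := if x \in leaves ul then 0 else if x \in leaves ur then 1 else 2 in
      forall i j, consec (leaves v) X i j -> c (X j) = (c (X i)).+1 %% 3
  | _ => False
  end.

Definition weak_right_node (X : qseq) (v : bst) : Prop :=
  match v with
  | Node l (Node ul ur) =>
      let c x := if x \in leaves ur then 0 else if x \in leaves ul then 1 else 2 in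
      forall i j, consec (leaves v) X i j -> c (X j) = (c (X i)).+1 %% 3
  | _ => False
  end.

Definition weakly_stable_node (X : qseq) (v : bst) : Prop :=
  weak_left_node X v \/ weak_right_node X v.

Definition queries_leaves (T : bst) (X : qseq) : Prop :=
  forall i, X i \in leaves T.

Definition mixed_stable (T : bst) (X : qseq) : Prop :=
  queries_leaves T X /\
  forall v, List.In v (inner T) -> strongly_stable_node X v \/ weakly_stable_node X v.

Definition strongly_stable (T : bst) (X : qseq) : Prop :=
  queries_leaves T X /\ forall v, List.In v (inner T) -> strongly_stable_node X v.

Definition num_weakly_stable (T : bst) (X : qseq) (n : nat) : Prop :=
  exists m : bitseq,
    [/\ size m = size (inner T),
        forall i, i < size m ->
          (nth false m i <-> weakly_stable_node X (nth (Leaf 0) (inner T) i))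
      & count id m = n].

Definition weakly_stable (T : bst) (X : qseq) : Prop :=
  mixed_stable T X /\
  exists n, num_weakly_stable T X n /\ n.*2 = size (inner T).

Definition occurs_once_every (X : qseq) (u p : nat) : Prop :=
  forall i, count (fun k => X k == u) (iota i p) = 1.

Definition is_period (X : qseq) (p : nat) : Prop :=
  0 < p /\ forall i, X (i + p) = X i.

(* length of the atomic sequence: the shortest block whose repetitions
   give back the (infinite) stable sequence, i.e. its least period *)
Definition atomic_length (X : qseq) (n : nat) : Prop :=
  is_period X n /\ forall m, is_period X m -> n <= m.

(* If the queries to the keys below a node v occur exactly at positions o, o + p, o + 2p, ...,
   then at a strongly-stable node the two children split them into two progressions of
   period 2p, and at a weakly-stable node the two subtrees of the favoured child and the
   other child split them into three progressions of period 3p; the favoured child itself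
   is skipped, as its queries alternate and so it is not weakly stable.  Going down from the
   root (o = 0, p = 1), each leaf u is queried with period 2^a 3^b, where b counts the
   weakly-stable nodes and a the remaining non-favoured nodes on the path to u.  As every
   weakly-stable node has a favoured child that is not, a + 2 #weak <= #inner, which forces
   a = 0 when half of the inner nodes are weakly stable; and since no node is both strongly
   and weakly stable, b = 0 when X is strongly stable.  The least period of X is the lcm
   of the leaf periods, 2^(max a) 3^(max b). *)

From mathcomp Require Import all_boot zify.
From Stdlib Require Import ClassicalEpsilon.

Set Implicit Arguments.
Unset Strict Implicit.

Lemma uniq_mem_catr (s1 s2 : seq nat) x : uniq (s1 ++ s2) -> x \in s1 ++ s2 ->
  (x \in s2) = (x \notin s1).
Proof.
rewrite cat_uniq mem_cat => /and3P[_ /hasPn d _] /orP[x1|x2]; last by rewrite x2 d.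
by rewrite x1; apply/negbTE/(contraTN _ x1)/d.
Qed.

Lemma modn_addl_eq m c k t : c < m -> t < m ->
  ((c + k) %% m == t) = (k == t + (m - c) %[mod m]).
Proof.
move=> cm tm; rewrite -(eqn_modDl c k).
have -> : c + (t + (m - c)) = t + m by rewrite addnCA subnKC // ltnW.
by rewrite modnDr (modn_small tm).
Qed.

Lemma count_residue_window i P o : o < P -> count (fun k => k %% P == o) (iota i P) = 1.
Proof.
move=> oP; set f := fun k => _; elim: i => [|i IH].
  rewrite (@eq_in_count _ _ (pred1 o)); last first.
    by move=> k; rewrite mem_iota => /andP[_ kP]; rewrite /f /= modn_small.
  by rewrite count_uniq_mem ?iota_uniq // mem_iota add0n oP.
have e1 : count f (iota i P.+1) = f i + count f (iota i.+1 P) by [].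
have e2 : count f (iota i P.+1) = count f (iota i P) + f (i + P).
  by rewrite -addn1 iotaD count_cat /= addn0.
by move: e1 e2; rewrite IH /f modnDr; lia.
Qed.

Lemma mul2_period p a b : p * 2 * (2 ^ a * 3 ^ b) = p * (2 ^ a.+1 * 3 ^ b).
Proof. by rewrite expnS -!mulnA. Qed.

Lemma mul3_period p a b : p * 3 * (2 ^ a * 3 ^ b) = p * (2 ^ a * 3 ^ b.+1).
Proof. by rewrite expnS (mulnCA (2 ^ a)) -!mulnA. Qed.

Lemma dvdn_exp_bigmax (s : seq nat) (F : nat -> nat) q m :
  (forall u, u \in s -> q ^ F u %| m) -> q ^ (\max_(u <- s) F u) %| m.
Proof.
move=> h; rewrite big_seq; apply: (big_ind (fun n => q ^ n %| m)) => //.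
by move=> x y hx hy; rewrite /maxn; case: ifP.
Qed.

Lemma dvdn_pow23_bigmax (s : seq nat) (a b : nat -> nat) m :
  (forall u, u \in s -> 2 ^ a u * 3 ^ b u %| m) <->
  2 ^ (\max_(u <- s) a u) * 3 ^ (\max_(u <- s) b u) %| m.
Proof.
split => [h | h u su]; last first.
  by apply: dvdn_trans h; apply: dvdn_mul; apply: dvdn_exp2l; exact: leq_bigmax_seq.
rewrite Gauss_dvd; last by rewrite coprimeXl // coprimeXr.
by apply/andP; split; apply: dvdn_exp_bigmax => u /h; apply: dvdn_trans;
  [apply: dvdn_mulr | apply: dvdn_mull].
Qed.

Fixpoint all_inner (P : bst -> Prop) (t : bst) : Prop :=
  if t is Node l r then [/\ P t, all_inner P l & all_inner P r] else True.

Lemma all_inner_In P t : (forall v, List.In v (inner t) -> P v) -> all_inner P t.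
Proof.
elim: t => //= l IHl r IHr h; split; first by apply: h; left.
- by apply: IHl => v hv; apply: h; right; apply: List.in_or_app; left.
- by apply: IHr => v hv; apply: h; right; apply: List.in_or_app; right.
Qed.

Lemma size_leaves_gt0 t : 0 < size (leaves t).
Proof. by elim: t => //= l hl r _; rewrite size_cat addn_gt0 hl. Qed.

Definition weak_class (A0 A1 : seq nat) (x : nat) : nat :=
  if x \in A0 then 0 else if x \in A1 then 1 else 2.

Lemma weak_class_lt3 A0 A1 x : weak_class A0 A1 x < 3.
Proof. by rewrite /weak_class; case: ifP => //; case: ifP. Qed.

Lemma weak_classE (A0 A1 A2 : seq nat) x : uniq (A0 ++ A1 ++ A2) -> x \in A0 ++ A1 ++ A2 ->
  [/\ (weak_class A0 A1 x == 0) = (x \in A0), (weak_class A0 A1 x == 1) = (x \in A1)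
    & (weak_class A0 A1 x == 2) = (x \in A2)].
Proof.
rewrite cat_uniq => /and3P[_ /hasPn d0 /[!cat_uniq] /and3P[_ /hasPn d1 _]].
rewrite /weak_class !mem_cat => x012.
case: ifP => x0.
  have : x \notin A1 ++ A2 by apply: contraTN x0 => /d0.
  by rewrite mem_cat negb_or => /andP[/negbTE -> /negbTE ->].
case: ifP => x1; last by move: x012; rewrite x0 x1.
by have /negbTE -> : x \notin A2 by apply: contraTN x1 => /d1.
Qed.

Lemma weak_class_filter V A0 A1 A2 : uniq (A0 ++ A1 ++ A2) -> V =i A0 ++ A1 ++ A2 ->
  [/\ [seq x <- V | weak_class A0 A1 x == 0] =i A0,
       [seq x <- V | weak_class A0 A1 x == 1] =i A1
     & [seq x <- V | weak_class A0 A1 x == 2] =i A2].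
Proof.
move=> hu eV; split=> x; rewrite mem_filter eV; have [hx|hx] := boolP (x \in A0 ++ A1 ++ A2).
all: try by have [e0 e1 e2] := weak_classE hu hx; rewrite andbT ?e0 ?e1 ?e2.
all: by move: hx; rewrite andbF !mem_cat; case: (x \in A0); case: (x \in A1); case: (x \in A2).
Qed.

(* [Node a b] is the favoured child of [v] and [w] its other child. *)
Definition weak_shape (v a b w : bst) : Prop :=
  v = Node (Node a b) w \/ v = Node w (Node a b).

Lemma weak_shape_leaves v a b w A0 A1 : weak_shape v a b w ->
  (A0, A1) = (leaves a, leaves b) \/ (A0, A1) = (leaves b, leaves a) ->
  perm_eq (leaves v) (A0 ++ A1 ++ leaves w).
Proof.
move=> hv hA; apply: (@perm_trans _ (leaves a ++ leaves b ++ leaves w)).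
  by case: hv => -> /=; [rewrite catA | rewrite perm_catC catA].
by case: hA => -[-> ->]; rewrite // !catA perm_cat2r perm_catC.
Qed.

Section StableSequence.

Variable X : qseq.

Definition queries_ap (A : seq nat) (o p : nat) : Prop :=
  forall i, X i \in A <-> exists k, i = o + k * p.

Lemma queries_ap_eq_mem A B o p : A =i B -> queries_ap A o p -> queries_ap B o p.
Proof. by move=> eAB hA i; rewrite -eAB. Qed.

Lemma queries_ap_at V o p k : queries_ap V o p -> X (o + k * p) \in V.
Proof. by move=> hV; apply/hV; exists k. Qed.

Lemma consec_ap_sub V A o p k j : 0 < p -> queries_ap V o p -> {subset A <= V} -> k < j ->
  X (o + k * p) \in A -> X (o + j * p) \in A ->
  (forall l, k < l < j -> X (o + l * p) \notin A) ->
  consec A X (o + k * p) (o + j * p).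
Proof.
move=> p_gt0 hV sAV kj Ak Aj gap; split => //; first by rewrite ltn_add2l ltn_pmul2r.
move=> i /andP[ki ij]; apply/negP => Ai.
have [l il] := (hV i).1 (sAV _ Ai); subst i.
have /gap : k < l < j by apply/andP; split; nia.
by rewrite Ai.
Qed.

Lemma consec_ap V o p k : 0 < p -> queries_ap V o p ->
  consec V X (o + k * p) (o + k.+1 * p).
Proof.
move=> p_gt0 hV; apply: consec_ap_sub => // [||l]; rewrite ?queries_ap_at //.
by rewrite ltnS => /andP[/leq_trans h /h]; rewrite ltnn.
Qed.

Lemma queries_ap_residue V B o p m e : 0 < p -> e < m -> queries_ap V o p ->
  {subset B <= V} -> (forall k, (X (o + k * p) \in B) = (k %% m == e)) ->
  queries_ap B (o + e * p) (p * m).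
Proof.
move=> p_gt0 em hV sBV hB i; split.
- move=> Bi; have [k ik] := (hV i).1 (sBV _ Bi); subst i.
  move: Bi; rewrite hB => /eqP ke; exists (k %/ m).
  by rewrite {1}(divn_eq k m) ke; lia.
- move=> [k ->]; have -> : o + e * p + k * (p * m) = o + (e + k * m) * p by lia.
  by rewrite hB addnC modnMDl modn_small.
Qed.

Lemma occurs_once_every_ap u o P : o < P -> queries_ap [:: u] o P ->
  occurs_once_every X u P.
Proof.
move=> oP hu i; rewrite -(count_residue_window i oP); apply: eq_count => k /=.
apply/idP/idP => [/eqP Xk | /eqP kP].
  have /(hu k) [j ->] : X k \in [:: u] by rewrite Xk inE.
  by rewrite addnC modnMDl modn_small.
have : X k \in [:: u] by apply/hu; exists (k %/ P); rewrite {1}(divn_eq k P) kP addnC.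
by rewrite inE.
Qed.

Lemma is_period_ap (s : seq nat) (o P : nat -> nat) m : (forall i, X i \in s) ->
  (forall u, u \in s -> queries_ap [:: u] (o u) (P u)) -> 0 < m ->
  is_period X m <-> {in s, forall u, P u %| m}.
Proof.
move=> hs hap m_gt0; split => [[_ hm] u su | hdvd].
  have [k /addnI ->] : exists k, o u + m = o u + k * P u.
    by apply/(hap u su); rewrite hm; apply/(hap u su); exists 0; rewrite addn0.
  exact: dvdn_mull.
split => // i; have su := hs i; have [k ek] := (hap _ su i).1 (mem_head _ _).
have : X (i + m) \in [:: X i].
  apply/(hap _ su); exists (k + m %/ P (X i)).
  by rewrite mulnDl divnK ?hdvd // addnA -ek.
by rewrite inE => /eqP.
Qed.

Definition cycles (V : seq nat) (m : nat) (c : nat -> nat) : Prop :=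
  forall i j, consec V X i j -> c (X j) = (c (X i)).+1 %% m.

Lemma cycles_ap V m c o p : 0 < p -> queries_ap V o p -> cycles V m c ->
  c (X o) < m -> forall k, c (X (o + k * p)) = (c (X o) + k) %% m.
Proof.
move=> p_gt0 hV hc c0m; elim=> [|k IH]; first by rewrite addn0 addn0 modn_small.
rewrite (hc _ _ (consec_ap k p_gt0 hV)) IH addnS.
by rewrite -addn1 modnDml addn1.
Qed.

Lemma cycles_phase V m c o p : 0 < p -> queries_ap V o p -> cycles V m c ->
  (forall x, c x < m) -> exists K, forall i, c (X (o + (K + i) * p)) = i %% m.
Proof.
move=> p_gt0 hV hc cm; exists (m - c (X o)) => i.
by rewrite (cycles_ap p_gt0 hV hc) // addnA subnKC ?modnDl // ltnW.
Qed.

Lemma cycles_split V m c o p t : 0 < p -> o < p -> (forall x, c x < m) ->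
  queries_ap V o p -> cycles V m c -> t < m ->
  exists2 o', o' < p * m & queries_ap [seq x <- V | c x == t] o' (p * m).
Proof.
move=> p_gt0 op cm hV hc tm; set e := (t + (m - c (X o))) %% m.
have em : e < m by rewrite ltn_pmod // (leq_ltn_trans _ tm).
exists (o + e * p); first by rewrite (@leq_trans (p + e * p)) ?ltn_add2r // -mulSn mulnC leq_pmul2l.
apply: queries_ap_residue (hV) _ _ => // [x|k]; first by rewrite mem_filter => /andP[].
by rewrite mem_filter (queries_ap_at _ hV) andbT (cycles_ap p_gt0 hV hc) // modn_addl_eq.
Qed.

Lemma cycles3_alternating_contra V c (s : pred nat) i0 i1 i2 i3 :
  (forall x, c x < 3) -> cycles V 3 c -> {in V, forall x, (c x == 2) = s x} ->
  consec V X i0 i1 -> consec V X i1 i2 -> consec V X i2 i3 ->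
  s (X i0) != s (X i1) -> s (X i1) != s (X i2) -> s (X i2) != s (X i3) -> False.
Proof.
(* Three steps of the 3-cycle come back to the same class, but [s] has flipped. *)
move=> c3 hc hs c01 c12 c23 s01 s12 s23.
have c30 : c (X i3) = c (X i0).
  rewrite (hc _ _ c23) (hc _ _ c12) (hc _ _ c01).
  by case: (c (X i0)) (c3 (X i0)) => [|[|[|]]].
have [[_ V0 _ _] [_ _ V3 _]] := (c01, c23).
move: s01 s12 s23; rewrite -(hs _ V0) -(hs _ V3) c30.
by case: (c (X i0) == 2); case: (s (X i1)); case: (s (X i2)).
Qed.

Lemma weakly_stable_node_cycles v : weakly_stable_node X v ->
  exists a b w A0 A1, [/\ weak_shape v a b w,
    (A0, A1) = (leaves a, leaves b) \/ (A0, A1) = (leaves b, leaves a)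
  & cycles (leaves v) 3 (weak_class A0 A1)].
Proof.
rewrite /weakly_stable_node => -[hw|hw].
- case: v hw => // - [] // a b w hw.
  by exists a, b, w, (leaves a), (leaves b); split; [left | left |].
- case: v hw => // w [] // a b hw.
  by exists a, b, w, (leaves b), (leaves a); split; [right | right |].
Qed.

Lemma weak_shape_class2 v a b w A0 A1 : uniq (leaves v) -> weak_shape v a b w ->
  (A0, A1) = (leaves a, leaves b) \/ (A0, A1) = (leaves b, leaves a) ->
  {in leaves v, forall x, (weak_class A0 A1 x == 2) = (x \in leaves w)}.
Proof.
move=> hu hshape hA x; have hperm := weak_shape_leaves hshape hA.
have hu3 : uniq (A0 ++ A1 ++ leaves w) by rewrite -(perm_uniq hperm).
by rewrite (perm_mem hperm) => hx; have [_ _ ->] := weak_classE hu3 hx.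
Qed.

Lemma strong_split l r o p : uniq (leaves (Node l r)) -> 0 < p -> o < p ->
  queries_ap (leaves (Node l r)) o p -> strongly_stable_node X (Node l r) ->
  forall A, A \in [:: leaves l; leaves r] -> exists2 o', o' < p * 2 & queries_ap A o' (p * 2).
Proof.
rewrite /= cat_uniq => /and3P[_ /hasPn dlr _] p_gt0 op hV hs A hA.
have hc : cycles (leaves (Node l r)) 2 (fun x => x \notin leaves l).
  by move=> i j /hs; case: (X i \in _); case: (X j \in _).
have c2 x : (x \notin leaves l : nat) < 2 by case: (_ \notin _).
have [t t2 eA] :
    exists2 t, t < 2 & [seq x <- leaves (Node l r) | (x \notin leaves l : nat) == t] =i A.
  move: hA; rewrite !inE => /orP[] /eqP -> {A}; [exists 0 | exists 1] => // x;
    rewrite mem_filter /= mem_cat; case: (boolP (x \in leaves l)) => //= xl.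
  by apply/esym/negP => /dlr; rewrite xl.
have [o' o'_lt hA'] := cycles_split p_gt0 op c2 hV hc t2.
by exists o' => //; apply: queries_ap_eq_mem hA'.
Qed.

Lemma weak_split V A0 A1 A2 o p : uniq (A0 ++ A1 ++ A2) -> V =i A0 ++ A1 ++ A2 ->
  0 < p -> o < p -> queries_ap V o p -> cycles V 3 (weak_class A0 A1) ->
  forall A, A \in [:: A0; A1; A2] -> exists2 o', o' < p * 3 & queries_ap A o' (p * 3).
Proof.
move=> hu eV p_gt0 op hV hc A hA.
have [e0 e1 e2] := weak_class_filter hu eV.
have [t t3 eA] : exists2 t, t < 3 & [seq x <- V | weak_class A0 A1 x == t] =i A.
  by move: hA; rewrite !inE => /or3P[] /eqP ->; [exists 0 | exists 1 | exists 2].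
have [o' o'_lt hA'] := cycles_split p_gt0 op (@weak_class_lt3 A0 A1) hV hc t3.
by exists o' => //; apply: queries_ap_eq_mem hA'.
Qed.

Lemma strongly_stable_node_alt l r i j : uniq (leaves (Node l r)) ->
  strongly_stable_node X (Node l r) -> consec (leaves (Node l r)) X i j ->
  ((X i \in leaves l) != (X j \in leaves l)) && ((X i \in leaves r) != (X j \in leaves r)).
Proof.
move=> hu hs hij; have := hs _ _ hij; case: hij => [_ Vi Vj _].
by rewrite !(uniq_mem_catr hu) //; case: (X i \in _); case: (X j \in _).
Qed.

Lemma weak_not_strong v o p : uniq (leaves v) -> 0 < p ->
  queries_ap (leaves v) o p -> weakly_stable_node X v -> ~ strongly_stable_node X v.
Proof.
move=> hu p_gt0 hV /weakly_stable_node_cycles [a [b [w [A0 [A1 [hshape hA hc]]]]]] hs.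
have c2w := weak_shape_class2 hu hshape hA.
have alt k : (X (o + k * p) \in leaves w) != (X (o + k.+1 * p) \in leaves w).
  case: hshape hu hs (consec_ap k p_gt0 hV) => -> hu hs;
    by move=> /(strongly_stable_node_alt hu hs) /andP[].
exact: (cycles3_alternating_contra (@weak_class_lt3 A0 A1) hc c2w
  (consec_ap 0 p_gt0 hV) (consec_ap 1 p_gt0 hV) (consec_ap 2 p_gt0 hV) (alt 0) (alt 1) (alt 2)).
Qed.

Lemma favoured_chain v a b w A0 A1 o p : uniq (leaves v) -> 0 < p ->
  queries_ap (leaves v) o p -> weak_shape v a b w ->
  (A0, A1) = (leaves a, leaves b) \/ (A0, A1) = (leaves b, leaves a) ->
  cycles (leaves v) 3 (weak_class A0 A1) ->
  exists i0 i1 i2 i3, [/\ consec (leaves (Node a b)) X i0 i1, consec (leaves (Node a b)) X i1 i2,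
    consec (leaves (Node a b)) X i2 i3 & [/\ X i0 \in A0, X i1 \in A1, X i2 \in A0 & X i3 \in A1]].
Proof.
move=> hu p_gt0 hV hshape hA hc.
have hperm := weak_shape_leaves hshape hA.
have hu3 : uniq (A0 ++ A1 ++ leaves w) by rewrite -(perm_uniq hperm).
have [K hK] := cycles_phase p_gt0 hV hc (@weak_class_lt3 A0 A1).
pose q i := o + (K + i) * p.
have Vq i : X (q i) \in A0 ++ A1 ++ leaves w by rewrite -(perm_mem hperm) queries_ap_at.
have eU : leaves (Node a b) =i A0 ++ A1 by case: hA => -[-> ->] x; rewrite /= !mem_cat // orbC.
have Uq i : (X (q i) \in leaves (Node a b)) = (i %% 3 != 2).
  rewrite eU -hK; have [_ _ ->] := weak_classE hu3 (Vq i).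
  by rewrite (@uniq_mem_catr (A0 ++ A1) (leaves w)) ?negbK -?catA.
have sUV : {subset leaves (Node a b) <= leaves v}.
  by move=> x; rewrite eU (perm_mem hperm) catA => hx; rewrite mem_cat hx.
have chain i j : i < j -> i %% 3 != 2 -> j %% 3 != 2 -> (forall l, i < l < j -> l %% 3 == 2) ->
    consec (leaves (Node a b)) X (q i) (q j).
  move=> ij Ui Uj gap; apply: (consec_ap_sub p_gt0 hV sUV).
  - by rewrite ltn_add2l.
  - by rewrite -/(q i) Uq.
  - by rewrite -/(q j) Uq.
  move=> l /andP[Kl lj]; have -> : l = K + (l - K) by lia.
  by rewrite Uq negbK gap //; apply/andP; split; lia.
have [A0q A1q] : (forall i, X (q i) \in A0 = (i %% 3 == 0)) /\
    (forall i, X (q i) \in A1 = (i %% 3 == 1)).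
  by split=> i; have [e0 e1 _] := weak_classE hu3 (Vq i); rewrite -?e0 -?e1 hK.
exists (q 0), (q 1), (q 3), (q 4); rewrite !A0q !A1q.
split; last by [].
all: by apply: chain => // l; lia.
Qed.

Lemma weak_shape_uniq v a b w : uniq (leaves v) -> weak_shape v a b w ->
  uniq (leaves (Node a b)).
Proof. by move=> hu [] hv; move: hu; rewrite hv /= cat_uniq => /and3P[]. Qed.

Lemma favoured_not_weak v a b w A0 A1 o p : uniq (leaves v) -> 0 < p ->
  queries_ap (leaves v) o p -> weak_shape v a b w ->
  (A0, A1) = (leaves a, leaves b) \/ (A0, A1) = (leaves b, leaves a) ->
  cycles (leaves v) 3 (weak_class A0 A1) -> ~ weakly_stable_node X (Node a b).
Proof.
move=> hu p_gt0 hV hshape hA hc.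
move=> /weakly_stable_node_cycles [a' [b' [w' [A0' [A1' [hshape' hA' hc']]]]]].
have [i0 [i1 [i2 [i3 [c01 c12 c23 [m0 m1 m2 m3]]]]]] := favoured_chain hu p_gt0 hV hshape hA hc.
have hab := weak_shape_uniq hu hshape.
have [flip hflip] : exists flip,
    {in leaves (Node a b), forall x, (x \in leaves w') = (x \in leaves a) (+) flip}.
  by case: hshape' => [[_ <-] | [<- _]]; [exists true | exists false] => x hx;
    rewrite ?(uniq_mem_catr hab hx) ?addbT ?addbF.
have alt x y : x \in A0 -> y \in A1 -> ((x \in leaves w') != (y \in leaves w')) &&
    ((y \in leaves w') != (x \in leaves w')).
  move=> x0 y1; have ba z : z \in leaves b -> z \notin leaves a.
    by move=> zb; rewrite -(uniq_mem_catr hab) // mem_cat zb orbT.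
  have [xU yU] : x \in leaves (Node a b) /\ y \in leaves (Node a b).
    by case: hA x0 y1 => -[-> ->] x0 y1; rewrite /= !mem_cat x0 y1 ?orbT.
  have xy : (x \in leaves a) != (y \in leaves a).
    by case: hA x0 y1 => -[-> ->] x0 y1; rewrite ?x0 ?y1 ?(negbTE (ba _ x0)) ?(negbTE (ba _ y1)).
  by rewrite !hflip //; move: xy; case: (x \in _); case: (y \in _); case: (flip).
have c2w' := weak_shape_class2 (v := Node a b) hab hshape' hA'.
apply: (cycles3_alternating_contra (@weak_class_lt3 A0' A1') hc' c2w' c01 c12 c23).
- by case/andP: (alt _ _ m0 m1).
- by case/andP: (alt _ _ m2 m1).
- by case/andP: (alt _ _ m2 m3).
Qed.

Definition mixed_stable_node (v : bst) : Prop :=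
  strongly_stable_node X v \/ weakly_stable_node X v.

(* Weak stability of a node is not decidable; it is decided classically. *)
Definition weakb (v : bst) : bool :=
  if excluded_middle_informative (weakly_stable_node X v) then true else false.

Lemma weakbP v : reflect (weakly_stable_node X v) (weakb v).
Proof. by rewrite /weakb; case: excluded_middle_informative => h; constructor. Qed.

Definition weak_count (t : bst) : nat := count weakb (inner t).

Lemma weak_shape_counts v a b w : weak_shape v a b w ->
  weak_count v = weakb v + weakb (Node a b) + (weak_count a + weak_count b + weak_count w) /\
  size (inner v) = (size (inner a) + size (inner b) + size (inner w)).+2.
Proof.
by case=> ->; rewrite /weak_count /= !count_cat /= !size_cat /= ?count_cat ?size_cat; split; lia.
Qed.

Lemma weak_shape_sub (P : bst -> Prop) v a b w t : weak_shape v a b w ->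
  [\/ t = a, t = b | t = w] -> all_inner P v -> uniq (leaves v) ->
  [/\ all_inner P t, uniq (leaves t) & size (leaves t) < size (leaves v)].
Proof.
move=> hshape ht hP hu; have hperm := weak_shape_leaves hshape (or_introl erefl).
move: hu; rewrite (perm_uniq hperm) !cat_uniq => /and3P[ua _ /and3P[ub _ uw]].
have [Pa Pb Pw] : [/\ all_inner P a, all_inner P b & all_inner P w].
  by case: hshape hP => -> /=; [case=> _ [_ ? ?] ? | case=> _ ? [_ ? ?]].
have hsz : size (leaves v) = size (leaves a) + size (leaves b) + size (leaves w).
  by rewrite (perm_size hperm) !size_cat addnA.
have := size_leaves_gt0 a; have := size_leaves_gt0 b; have := size_leaves_gt0 w.
by case: ht => -> *; split => //; lia.
Qed.

(* [a] grows at the strongly-stable nodes and [b] at the weakly-stable ones; the favoured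
   child skipped below each weakly-stable node pays for it in the bound on [a]. *)
Definition leaf_periods (t : bst) (p : nat) : Prop :=
  forall u, u \in leaves t -> exists a b o,
    [/\ o < p * (2 ^ a * 3 ^ b), queries_ap [:: u] o (p * (2 ^ a * 3 ^ b)),
        a + (weak_count t).*2 <= size (inner t)
      & all_inner (strongly_stable_node X) t -> b = 0].

Lemma leaf_periods_half t p : leaf_periods t p -> (weak_count t).*2 <= size (inner t).
Proof.
move/(_ _ (mem_nth 0 (size_leaves_gt0 t))) => [a [b [o [_ _ h _]]]].
exact: leq_trans (leq_addl a _) h.
Qed.

Lemma leaf_periods_strong l r p : ~~ weakb (Node l r) ->
  leaf_periods l (p * 2) -> leaf_periods r (p * 2) -> leaf_periods (Node l r) p.
Proof.
move=> nw hl hr u; have hl2 := leaf_periods_half hl; have hr2 := leaf_periods_half hr.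
rewrite mem_cat => /orP[/hl|/hr] [a [b [o [ho hap ha hb]]]]; exists a.+1, b, o;
  rewrite -mul2_period; split=> //.
all: try by case=> _ sl sr; apply: hb.
all: by move: ha hl2 hr2; rewrite /weak_count /= (negbTE nw) count_cat size_cat; lia.
Qed.

Lemma leaf_periods_weak v a b w p : weak_shape v a b w -> weakb v -> ~~ weakb (Node a b) ->
  ~ strongly_stable_node X v -> leaf_periods a (p * 3) -> leaf_periods b (p * 3) ->
  leaf_periods w (p * 3) -> leaf_periods v p.
Proof.
move=> hshape hw nw ns pa pb pw u.
have [cnt sz] := weak_shape_counts hshape.
have := leaf_periods_half pa; have := leaf_periods_half pb; have := leaf_periods_half pw.
rewrite cnt sz hw (negbTE nw) => hw2 hb2 ha2.
rewrite (perm_mem (weak_shape_leaves hshape (or_introl erefl))) !mem_cat.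
move=> /or3P[/pa|/pb|/pw] [a' [b' [o [ho hap h2 _]]]]; exists a', b'.+1, o;
  rewrite -mul3_period; split=> //.
all: try by case: hshape ns => -> ns [].
all: lia.
Qed.

Definition leaf_periods_below (N p : nat) : Prop :=
  forall t m, size (leaves t) < N -> all_inner mixed_stable_node t -> uniq (leaves t) ->
    (exists2 o, o < p * m & queries_ap (leaves t) o (p * m)) -> leaf_periods t (p * m).

Lemma leaf_periods_weak_node v o p : leaf_periods_below (size (leaves v)) p ->
  all_inner mixed_stable_node v -> uniq (leaves v) -> 0 < p -> o < p ->
  queries_ap (leaves v) o p -> weakly_stable_node X v -> leaf_periods v p.
Proof.
move=> rec hmix hu p_gt0 op hV hw.
have [a [b [w [A0 [A1 [hshape hA hc]]]]]] := weakly_stable_node_cycles hw.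
have hperm := weak_shape_leaves hshape hA.
have hsplit := weak_split (etrans (esym (perm_uniq hperm)) hu) (perm_mem hperm) p_gt0 op hV hc.
have rec3 t : [\/ t = a, t = b | t = w] -> leaves t \in [:: A0; A1; leaves w] ->
    leaf_periods t (p * 3).
  by move=> ht /hsplit; have [? ? ?] := weak_shape_sub hshape ht hmix hu; exact: rec.
have [ma mb mw] : [/\ leaves a \in [:: A0; A1; leaves w], leaves b \in [:: A0; A1; leaves w]
    & leaves w \in [:: A0; A1; leaves w]].
  by case: hA => -[-> ->]; rewrite !inE !eqxx ?orbT.
apply: (leaf_periods_weak hshape _ _ _ (rec3 a (@Or31 _ _ _ erefl) ma)
  (rec3 b (@Or32 _ _ _ erefl) mb) (rec3 w (@Or33 _ _ _ erefl) mw)).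
- exact/weakbP.
- by apply/negP => /weakbP; exact: favoured_not_weak hu p_gt0 hV hshape hA hc.
- exact: weak_not_strong hu p_gt0 hV hw.
Qed.

Lemma leaf_periods_strong_node l r o p : leaf_periods_below (size (leaves (Node l r))) p ->
  all_inner mixed_stable_node (Node l r) -> uniq (leaves (Node l r)) -> 0 < p -> o < p ->
  queries_ap (leaves (Node l r)) o p -> ~ weakly_stable_node X (Node l r) ->
  leaf_periods (Node l r) p.
Proof.
move=> rec hmix hu p_gt0 op hV nw.
have hs : strongly_stable_node X (Node l r) by case: hmix => -[].
have hsplit := strong_split hu p_gt0 op hV hs.
move: hu hmix; rewrite /= cat_uniq => /and3P[ul _ ur] [_ mixl mixr].
have hsz : size (leaves (Node l r)) = size (leaves l) + size (leaves r) := size_cat _ _.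
have := size_leaves_gt0 l; have := size_leaves_gt0 r => sr sl.
apply: (leaf_periods_strong (introN (weakbP _) nw)); apply: rec => //; try lia.
all: by apply: hsplit; rewrite !inE eqxx ?orbT.
Qed.

Lemma leaf_periods_ap t o p : all_inner mixed_stable_node t -> uniq (leaves t) ->
  0 < p -> o < p -> queries_ap (leaves t) o p -> leaf_periods t p.
Proof.
have [n] := ubnP (size (leaves t)); elim: n t o p => // n IH [u|l r] o p lt_n.
  move=> _ _ _ op hV x; rewrite inE => /eqP ->; exists 0, 0, o.
  by rewrite !expn0 !muln1.
have rec : leaf_periods_below (size (leaves (Node l r))) p.
  move=> t m sz mix ut [o' o'_lt ap].
  exact: IH (leq_trans sz lt_n) mix ut (leq_ltn_trans (leq0n o') o'_lt) o'_lt ap.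
move=> hmix hu p_gt0 op hV; have [hw|nw] := weakbP (Node l r).
- exact: leaf_periods_weak_node rec hmix hu p_gt0 op hV hw.
- exact: leaf_periods_strong_node rec hmix hu p_gt0 op hV nw.
Qed.

Lemma leaf_periods_choice t : leaf_periods t 1 ->
  exists a b o : nat -> nat, forall u, u \in leaves t ->
    [/\ o u < 2 ^ a u * 3 ^ b u, queries_ap [:: u] (o u) (2 ^ a u * 3 ^ b u),
        a u + (weak_count t).*2 <= size (inner t)
      & all_inner (strongly_stable_node X) t -> b u = 0].
Proof.
move=> ht.
pose R u (e : nat * nat * nat) := u \in leaves t ->
  [/\ e.2 < 2 ^ e.1.1 * 3 ^ e.1.2, queries_ap [:: u] e.2 (2 ^ e.1.1 * 3 ^ e.1.2),
      e.1.1 + (weak_count t).*2 <= size (inner t)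
    & all_inner (strongly_stable_node X) t -> e.1.2 = 0].
have [f hf] : exists f, forall u, R u (f u).
  apply: choice => u; have [/ht [a [b [o]]]|nu] := boolP (u \in leaves t).
    by rewrite !mul1n => h; exists (a, b, o).
  by exists (0, 0, 0); rewrite /R (negbTE nu).
by exists (fun u => (f u).1.1), (fun u => (f u).1.2), (fun u => (f u).2).
Qed.

Lemma num_weakly_stableE T n : num_weakly_stable T X n -> n = weak_count T.
Proof.
case=> msk [hsz hnth <-]; rewrite /weak_count.
have -> : msk = map weakb (inner T).
  apply: (@eq_from_nth _ false); first by rewrite size_map.
  move=> i hi; rewrite (nth_map (Leaf 0)) -?hsz //.
  by apply/idP/idP => [/(hnth i hi)/weakbP | /weakbP/(hnth i hi)].
by rewrite count_map.
Qed.

End StableSequence.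

Theorem lemma1 (T : bst) (X : qseq) :
  is_bst T -> mixed_stable T X ->
  exists a b : nat -> nat,
    [/\ forall u, u \in leaves T -> occurs_once_every X u (2 ^ a u * 3 ^ b u),
        atomic_length X (2 ^ (\max_(u <- leaves T) a u) * 3 ^ (\max_(u <- leaves T) b u)),
        strongly_stable T X -> forall u, u \in leaves T -> b u = 0
      & weakly_stable T X -> forall u, u \in leaves T -> a u = 0].
Proof.
move=> hbst [hq hmix].
have hu : uniq (leaves T) := sorted_uniq ltn_trans ltnn hbst.
have hV : queries_ap X (leaves T) 0 1 by move=> i; split=> _; [exists i; rewrite muln1 | exact: hq].
have hmix' := all_inner_In (P := mixed_stable_node X) hmix.
have hT := leaf_periods_ap (o := 0) (p := 1) hmix' hu isT isT hV.
have [a [b [o hab]]] := leaf_periods_choice hT.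
have hap u : u \in leaves T -> queries_ap X [:: u] (o u) (2 ^ a u * 3 ^ b u) by case/hab.
have hper := is_period_ap hq hap.
exists a, b; split.
- by move=> u /hab [ho hu_ap _ _]; exact: occurs_once_every_ap ho hu_ap.
- set L := _ * _; have L_gt0 : 0 < L by rewrite muln_gt0 !expn_gt0.
  split.
    by apply/(hper _ L_gt0)/dvdn_pow23_bigmax.
  by move=> m [m_gt0 hm]; apply: dvdn_leq (m_gt0) _; apply/dvdn_pow23_bigmax/(hper _ m_gt0).
- by move=> [_ hs] u /hab [_ _ _ ->] //; exact: all_inner_In.
- by move=> [_ [n [/num_weakly_stableE -> hn]]] u /hab [_ _ + _]; rewrite hn; lia.
Qed.
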